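(* Let $v\equiv 9\pmod{18}$ and let $(\mathbb{Z}_v,\mathcal{B})$ be a cyclic $\mathrm{STS}(v)$ (with cyclic automorphism $i\mapsto i+1 \bmod v$). Then $\mathcal{B}$ has a full orbit of Type $3$.
   Context: A Steiner triple system $\mathrm{STS}(v)$ is a pair $(X,\mathcal{B})$ with $|X|=v$ and $\mathcal{B}$ a collection of 3-subsets of $X$ such that every 2-subset lies in exactly one block. It is cyclic if (after relabeling) $X=\mathbb{Z}_v$ and the map $\alpha: i\mapsto i+1 \pmod v$ maps blocks to blocks. The blocks are then partitioned into orbits under the group generated by $\alpha$; an orbit with $v$ blocks is a full orbit. For $v\equiv 3\pmod 6$ there is, besides full orbits, exactly one short orbit, namely the orbit of $\{0,v/3,2v/3\}$, of size $v/3$. When $3\mid v$, an orbit is of Type $i$ ($i=1,2,3$) if every block in it contains elements of exactly $i$ distinct residue classes modulo $3$ (this is the same for all blocks of an orbit). *)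

From mathcomp Require Import all_boot.
Unset Strict Implicit. Unset Printing Implicit Defensive.

(* Points of Z_v are represented by 'I_v (residues 0..v-1); blocks are
   subsets of 'I_v, a design is a set of blocks. *)

Definition is_STS (v : nat) (B : {set {set 'I_v}}) : Prop :=
  (forall b, b \in B -> #|b| = 3) /\
  (forall x y : 'I_v, x != y -> exists! b : {set 'I_v}, [/\ b \in B, x \in b & y \in b]).

Definition shift_block (v k : nat) (b : {set 'I_v}) : {set 'I_v} :=
  [set x : 'I_v | [exists y in b, (x : nat) == (y + k) %% v]].

Definition is_cyclic (v : nat) (B : {set {set 'I_v}}) : Prop :=
  forall b, b \in B -> @shift_block v 1 b \in B.

Definition block_orbit (v : nat) (b : {set 'I_v}) : {set {set 'I_v}} :=
  [set @shift_block v k b | k : 'I_v].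

Definition full_orbit (v : nat) (b : {set 'I_v}) : Prop :=
  #|@block_orbit v b| = v.

Definition block_type (v : nat) (b : {set 'I_v}) : nat :=
  size (undup [seq (val x) %% 3 | x <- enum b]).

From mathcomp Require Import all_boot zify.

(* The proof does not need the cyclic structure of the design, only two facts:
   1. Some block is of Type 3 ("rainbow": its three points lie in distinct
      residue classes mod 3).  Double counting the ordered pairs (x, y) of
      points with x <> y (mod 3), each lying in exactly one block, gives
      v * (2v/3) = sum over blocks of the rainbow pairs inside the block.
      A non-rainbow triple contains 0 or 2 such unordered pairs, hence a
      multiple of 4 ordered ones, whereas v * (2v/3) = 2 (mod 4) when
      v = 9 (mod 18).
   2. When 9 divides v, every rainbow triple b has a full orbit.  If
      b + k = b + k' with d = k' - k, then every x in b satisfies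
      x = u + d (mod v) for some u in b; mod 3 this map shifts residues by
      the constant d, so it permutes the rainbow triple b.  Summing over b
      gives 3d = 0 (mod v), hence 3 | d as 9 | v; so the map preserves
      residues, fixes every point of b, and v | d, i.e. k = k'. *)

Section PairDoubleCounting.
Variables (T : finType) (B : {set {set T}}).
Hypothesis pair_in_unique_block :
  forall x y : T, x != y -> exists! b, [/\ b \in B, x \in b & y \in b].

Lemma pair_double_count (w : T -> T -> nat) : (forall x, w x x = 0) ->
  \sum_x \sum_y w x y = \sum_(b in B) \sum_(x in b) \sum_(y in b) w x y.
Proof.
move=> w_diag.
have split_pair x y :
    w x y = \sum_(b in B) (if (x \in b) && (y \in b) then w x y else 0).
  have [<-|nxy] := eqVneq x y.
    by rewrite w_diag; apply/esym/big1 => b _; case: ifP.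
  have [b0 [[b0B xb0 yb0] b0_unique]] := pair_in_unique_block _ _ nxy.
  rewrite (bigD1 b0) //= xb0 yb0 big1 ?addn0 // => b /andP [bB nb].
  case: ifP => // /andP [xb yb].
  by move: nb; rewrite -(b0_unique b) ?eqxx.
rewrite (eq_bigr (fun x => \sum_y \sum_(b in B)
           (if (x \in b) && (y \in b) then w x y else 0))); last first.
  by move=> x _; apply: eq_bigr => y _; exact: split_pair.
under eq_bigr do rewrite exchange_big.
rewrite exchange_big; apply: eq_bigr => b _.
rewrite [RHS]big_mkcond; apply: eq_bigr => x _.
by case: (x \in b); [rewrite [RHS]big_mkcond | rewrite big1].
Qed.

End PairDoubleCounting.

Definition residue3 {v} (x : 'I_v) : nat := val x %% 3.

Definition cross_pairs {v} (b : {set 'I_v}) : nat :=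
  \sum_(x in b) \sum_(y in b) (residue3 x != residue3 y : nat).

Lemma block_type_card v (b : {set 'I_v}) :
  (block_type v b == #|b|) = uniq [seq residue3 x | x <- enum b].
Proof.
rewrite /block_type cardE -(size_map residue3) eqn_leq size_undup /=.
by rewrite leqNgt ltn_size_undup negbK.
Qed.

Lemma enum_card3 {T : finType} {b : {set T}} :
  #|b| = 3 -> exists x y z, enum b = [:: x; y; z].
Proof.
by rewrite cardE; case: (enum b) => [|x [|y [|z [|]]]] // _; exists x, y, z.
Qed.

Lemma count_other_residues (n k : nat) :
  k < 3 -> \sum_(0 <= j < 3 * n) (k != j %% 3 : nat) = 2 * n.
Proof.
move=> lt_k3; elim: n => [|n IHn]; first by rewrite muln0 big_geq.
have -> : 3 * n.+1 = (3 * n).+3 by lia.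
rewrite !big_nat_recr //= IHn.
have -> : (3 * n) %% 3 = 0 by lia.
have -> : (3 * n).+1 %% 3 = 1 by lia.
have -> : (3 * n).+2 %% 3 = 2 by lia.
by case: k {IHn} lt_k3 => [|[|[|k]]] //= _; lia.
Qed.

Lemma sum_cross_residues v : 3 %| v ->
  \sum_(x : 'I_v) \sum_(y : 'I_v) (residue3 x != residue3 y : nat)
  = v * (2 * (v %/ 3)).
Proof.
move=> dvd3v.
have v_eq : v = 3 * (v %/ 3) by rewrite mulnC divnK.
have row (x : 'I_v) :
    \sum_(y : 'I_v) (residue3 x != residue3 y : nat) = 2 * (v %/ 3).
  rewrite -(@count_other_residues (v %/ 3) (residue3 x)) ?ltn_pmod //.
  by rewrite -v_eq big_mkord.
by rewrite (eq_bigr _ (fun x _ => row x)) sum_nat_const card_ord.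
Qed.

Lemma cross_pairs_triple {v} {b : {set 'I_v}} {x y z : 'I_v} :
  enum b = [:: x; y; z] ->
  cross_pairs b = 2 * ((residue3 x != residue3 y) + (residue3 x != residue3 z)
                       + (residue3 y != residue3 z)).
Proof.
move=> enum_b; rewrite /cross_pairs -big_enum enum_b !big_cons big_nil.
rewrite -!big_enum enum_b !big_cons !big_nil !eqxx.
by rewrite [residue3 y == _]eq_sym [residue3 z == residue3 x]eq_sym
           [residue3 z == _]eq_sym /=; lia.
Qed.

Lemma four_dvd_cross_pairs v (b : {set 'I_v}) :
  #|b| = 3 -> block_type v b != 3 -> 4 %| cross_pairs b.
Proof.
move=> card_b; have [x [y [z enum_b]]] := enum_card3 card_b.
rewrite -[X in _ != X]card_b block_type_card enum_b (cross_pairs_triple enum_b).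
rewrite /= !inE; lia.
Qed.

Lemma rainbow_block_exists {v} {B : {set {set 'I_v}}} :
  v %% 18 = 9 -> is_STS v B -> exists2 b, b \in B & block_type v b = 3.
Proof.
move=> v_mod [block_card pair_unique].
case: (boolP [exists b in B, block_type v b == 3]).
  by move=> /exists_inP [b bB /eqP]; exists b.
move=> /exists_inPn no_rainbow; exfalso.
have : 4 %| \sum_(b in B) cross_pairs b.
  apply: dvdn_sum => b bB.
  by apply: four_dvd_cross_pairs; [exact: block_card | exact: no_rainbow].
rewrite -(pair_double_count _ _ pair_unique) => [|x]; last by rewrite eqxx.
rewrite sum_cross_residues; last by lia.
have [q ->] : exists q, v = 18 * q + 9 by exists (v %/ 18); lia.
have -> : (18 * q + 9) %/ 3 = 6 * q + 3 by lia.
have -> : (18 * q + 9) * (2 * (6 * q + 3))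
          = 4 * (54 * q * q + 54 * q + 13) + 2 by nia.
by rewrite dvdn_addr ?dvdn_mulr.
Qed.

(* A map of a rainbow triple into itself that shifts residues mod 3 by a
   common amount e is injective, hence a permutation, so it preserves sums. *)
Lemma shifted_triple_sum (x y z ux uy uz e : nat) :
  x %% 3 <> y %% 3 -> x %% 3 <> z %% 3 -> y %% 3 <> z %% 3 ->
  ux + e = x %[mod 3] -> uy + e = y %[mod 3] -> uz + e = z %[mod 3] ->
  [\/ ux = x, ux = y | ux = z] -> [\/ uy = x, uy = y | uy = z] ->
  [\/ uz = x, uz = y | uz = z] ->
  ux + uy + uz = x + y + z.
Proof.
move=> nxy nxz nyz ex ey ez ux_in uy_in uz_in.
by case: ux_in => ?; case: uy_in => ?; case: uz_in => ?; subst; lia.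
Qed.

Lemma congr_add {v a b c e : nat} :
  a = c %[mod v] -> b = e %[mod v] -> a + b = c + e %[mod v].
Proof. by move=> eq_ac eq_be; rewrite -modnDm eq_ac eq_be modnDm. Qed.

Lemma rigid_rainbow_triple {v x y z ux uy uz k d : nat} : 9 %| v ->
  x %% 3 <> y %% 3 -> x %% 3 <> z %% 3 -> y %% 3 <> z %% 3 ->
  x + k = ux + (k + d) %[mod v] -> y + k = uy + (k + d) %[mod v] ->
  z + k = uz + (k + d) %[mod v] ->
  [\/ ux = x, ux = y | ux = z] -> [\/ uy = x, uy = y | uy = z] ->
  [\/ uz = x, uz = y | uz = z] ->
  v %| d.
Proof.
move=> dvd9v nxy nxz nyz ex ey ez ux_in uy_in uz_in.
have dvd3v : 3 %| v := dvdn_trans (isT : 3 %| 9) dvd9v.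
have mod3 a c : a = c %[mod v] -> a = c %[mod 3].
  by move=> eq_ac; rewrite -(modn_dvdm a dvd3v) eq_ac modn_dvdm.
have sum_u : ux + uy + uz = x + y + z.
  apply: (@shifted_triple_sum _ _ _ _ _ _ d nxy nxz nyz _ _ _
                                ux_in uy_in uz_in).
  - by have ex3 := mod3 _ _ ex; clear -ex3; lia.
  - by have ex3 := mod3 _ _ ey; clear -ex3; lia.
  - by have ex3 := mod3 _ _ ez; clear -ex3; lia.
have dvd_v_3d : v %| 3 * d.
  have := congr_add (congr_add ex ey) ez.
  have -> : x + k + (y + k) + (z + k) = (x + y + z + 3 * k) + 0 by clear; lia.
  have -> : ux + (k + d) + (uy + (k + d)) + (uz + (k + d))
            = (x + y + z + 3 * k) + 3 * d by clear -sum_u; lia.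
  by move/eqP; rewrite eqn_modDl mod0n eq_sym.
have dvd3d : 3 %| d.
  by rewrite -(@dvdn_pmul2l 3) //; apply: dvdn_trans dvd9v dvd_v_3d.
have ux_x : ux = x.
  move: (mod3 _ _ ex) => ex3; clear -ex3 ux_in dvd3d nxy nxz.
  by move: ex3; case: ux_in => ->; lia.
move: ex; rewrite ux_x addnA -[X in X = _ %[mod v]]addn0.
by move/eqP; rewrite eqn_modDl mod0n eq_sym.
Qed.

Lemma shift_block_translate {v} {k k' : nat} {b : {set 'I_v}} {w : 'I_v} :
  shift_block v k b = shift_block v k' b -> w \in b ->
  exists2 u : 'I_v, u \in b & w + k = u + k' %[mod v].
Proof.
move=> eq_shift wb.
have v_gt0 : 0 < v by apply: leq_ltn_trans (ltn_ord w).
have : Ordinal (ltn_pmod (w + k) v_gt0) \in shift_block v k b.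
  by rewrite inE; apply/existsP; exists w; rewrite wb /=.
by rewrite eq_shift inE => /existsP [u /andP [ub /eqP eq_wu]]; exists u.
Qed.

Lemma rainbow_full_orbit v (b : {set 'I_v}) :
  9 %| v -> #|b| = 3 -> block_type v b = 3 -> full_orbit v b.
Proof.
move=> dvd9v card_b /eqP; have [x [y [z enum_b]]] := enum_card3 card_b.
rewrite -[X in _ == X]card_b block_type_card enum_b /= !inE andbT.
rewrite negb_or => /andP [/andP [/eqP nxy /eqP nxz] /eqP nyz].
have in_b (u : 'I_v) : (u \in b) = (u \in [:: x; y; z]).
  by rewrite -enum_b mem_enum.
have in_triple (u : 'I_v) : u \in b -> [\/ val u = x, val u = y | val u = z].
  by rewrite in_b !inE => /or3P [] /eqP ->; constructor.
have [xb yb zb] : [/\ x \in b, y \in b & z \in b].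
  by rewrite !in_b !inE !eqxx !orbT.
have no_collision (k k' : 'I_v) :
    k < k' -> shift_block v k b = shift_block v k' b -> False.
  move=> lt_kk' eq_shift.
  have [ux uxb ex] := shift_block_translate eq_shift xb.
  have [uy uyb ey] := shift_block_translate eq_shift yb.
  have [uz uzb ez] := shift_block_translate eq_shift zb.
  have k'_eq : (k' : nat) = k + (k' - k) by rewrite subnKC // ltnW.
  rewrite k'_eq in ex ey ez.
  have := rigid_rainbow_triple dvd9v nxy nxz nyz ex ey ez
            (in_triple _ uxb) (in_triple _ uyb) (in_triple _ uzb).
  move/(dvdn_leq _); rewrite subn_gt0 => /(_ lt_kk').
  by rewrite leqNgt (leq_ltn_trans (leq_subr _ _) (ltn_ord k')).
rewrite /full_orbit /block_orbit card_imset ?card_ord // => k k' eq_shift.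
apply: val_inj; case: (ltngtP k k') => // [lt_kk'|lt_k'k].
- by case: (no_collision _ _ lt_kk' eq_shift).
- by case: (no_collision _ _ lt_k'k (esym eq_shift)).
Qed.

Theorem mainTheorem3 (v : nat) (B : {set {set 'I_v}}) :
  v %% 18 = 9 -> is_STS v B -> is_cyclic v B ->
  exists2 b, b \in B & full_orbit v b /\ block_type v b = 3.
Proof.
move=> v_mod sts _.
have [b bB type_b] := rainbow_block_exists v_mod sts.
exists b => //; split => //.
apply: rainbow_full_orbit type_b; last exact: sts.1 b bB.
by lia.
Qed.
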